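(* Let $N \ge 1$ and let $W_N$ be the set of binary words of length $N$. Define $\varphi_7 : W_N \to W_N$ by $\varphi_7(u) = v\, 1010110\, v'$ if $u = v\, 0110110\, v'$ where $v, v'$ are (possibly empty) words such that $v0110$ does not contain $0110110$ as a contiguous subword; and $\varphi_7(u) = u$ otherwise. Then $|P(\varphi_7(u))| \leq |P(u)|$ for every $u \in W_N$.
   Context: Juxtaposition denotes concatenation. For a binary word $w = w_1 \cdots w_\ell$ of length $\ell$, $P(w)$ is the set of indices $i \geq 2$ such that at least one of the following holds: (i) $\ell \geq i$ and $w_{i-1} w_i = 00$; (ii) $\ell \geq i+2$ and $w_{i-1} w_i w_{i+1} w_{i+2} = 0100$; (iii) $\ell \geq i+3$ and $w_{i-1} \cdots w_{i+3} = 01010$. *)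

(* Binary words are [seq bool]; letter 0 = false, 1 = true. *)
From mathcomp Require Import all_boot.
Set Implicit Arguments. Unset Strict Implicit. Unset Printing Implicit Defensive.

(* The contiguous factor w_{j+1} ... w_{j+n} (0-based start j). *)
Definition factor (w : seq bool) (j n : nat) : seq bool := take n (drop j w).

(* Membership of the (1-based) index i in P(w):
   i >= 2 and one of
   (i)   l >= i   and w_{i-1} w_i = 00,
   (ii)  l >= i+2 and w_{i-1} w_i w_{i+1} w_{i+2} = 0100,
   (iii) l >= i+3 and w_{i-1} ... w_{i+3} = 01010.
   The 1-based letter w_{i-1} is at 0-based position i-2. *)
Definition inP (w : seq bool) (i : nat) : bool :=
  (2 <= i) &&
  [|| (i <= size w) && (factor w (i - 2) 2 == [:: false; false]),
      (i + 2 <= size w) && (factor w (i - 2) 4 == [:: false; true; false; false])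
    | (i + 3 <= size w) && (factor w (i - 2) 5 == [:: false; true; false; true; false])].

(* P(w) as the increasing list of its elements; every element of P(w) lies
   in [2, size w], so enumerating 0 .. size w captures all of P(w). *)
Definition Pset (w : seq bool) : seq nat := [seq i <- iota 0 (size w).+1 | inP w i].

Definition cardP (w : seq bool) : nat := size (Pset w).

Definition pat7 : seq bool := [:: false; true; true; false; true; true; false].
Definition rep7 : seq bool := [:: true; false; true; false; true; true; false].
Definition suf0110 : seq bool := [:: false; true; true; false].

(* Admissible split positions k: u = v 0110110 v' with v = take k u and
   v 0110 not containing 0110110 as a contiguous subword. *)
Definition phi7_ok (u : seq bool) (k : nat) : bool :=
  (factor u k 7 == pat7) && ~~ infix pat7 (take k u ++ suf0110).

(* phi_7(u) = v 1010110 v' for such a decomposition (it is unique when it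
   exists; we take the first admissible k), and phi_7(u) = u otherwise. *)
Definition phi7 (u : seq bool) : seq bool :=
  match [seq k <- iota 0 (size u).+1 | phi7_ok u k] with
  | k :: _ => take k u ++ rep7 ++ drop (k + 7) u
  | [::] => u
  end.

(* phi_7 only turns the leading 01 of a factor 0110110 into 10, leaving the
   rest of the word alone, and in fact P(phi_7 u) is a subset of P(u).  An index
   whose window starts after the swapped letters sees the same suffix in both
   words.  A window meeting them has length at most 5 and ends inside the
   7-letter factor, so it is decided by the letters before the factor and by
   1010110 versus 0110110, and a finite check shows that each of 00, 0100,
   01010 found in the first word is also found in the second. *)
From mathcomp Require Import all_boot zify.

Definition starts_P (s : seq bool) : bool :=
  [|| take 2 s == [:: false; false], take 4 s == [:: false; true; false; false]
    | take 5 s == [:: false; true; false; true; false]].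

Lemma inP_starts_P w i : 2 <= i -> i + 3 <= size w ->
  inP w i = starts_P (drop (i - 2) w).
Proof.
move=> i_ge2 i_le; rewrite /inP /factor /starts_P i_ge2 i_le.
by have [-> ->] : i <= size w /\ i + 2 <= size w by lia.
Qed.

Lemma inP_drop_eq w1 w2 i : size w1 = size w2 -> drop (i - 2) w1 = drop (i - 2) w2 ->
  inP w1 i = inP w2 i.
Proof. by move=> eq_size eq_drop; rewrite /inP /factor eq_size eq_drop. Qed.

Lemma starts_P_rep7_pat7 (r x y : seq bool) :
  starts_P (r ++ rep7 ++ x) -> starts_P (r ++ pat7 ++ y).
Proof.
by rewrite /starts_P; case: r => [|[] [|[] [|[] [|[] [|[] r]]]]] //=; rewrite !take0.
Qed.

Lemma inP_rep7_pat7 (v v' : seq bool) i :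
  inP (v ++ rep7 ++ v') i -> inP (v ++ pat7 ++ v') i.
Proof.
have eq_size : size (v ++ rep7 ++ v') = size (v ++ pat7 ++ v') by rewrite !size_cat.
have [i_lt2 | i_ge2] := ltnP i 2; first by rewrite /inP leqNgt i_lt2.
have [far | near] := leqP (size v + 2) (i - 2).
  rewrite (@inP_drop_eq _ (v ++ rep7 ++ v')) //.
  have catE (b c : bool) :
      v ++ [:: b, c & drop 2 pat7] ++ v' = (v ++ [:: b; c]) ++ drop 2 pat7 ++ v'.
    by rewrite -catA.
  rewrite -[pat7]/[:: false, true & drop 2 pat7] -[rep7]/[:: true, false & drop 2 pat7].
  rewrite !catE !drop_cat !size_cat.
  by have -> : (i - 2 < size v + 2) = false by lia.
have i_le : i + 3 <= size (v ++ pat7 ++ v') by rewrite !size_cat /=; lia.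
rewrite !inP_starts_P // ?eq_size // !drop_cat.
case: ltnP => [_ | ge_v]; first exact: starts_P_rep7_pat7.
have [-> | ->] : i - 2 - size v = 0 \/ i - 2 - size v = 1 by lia.
  exact: (@starts_P_rep7_pat7 [::]).
(* The suffix 010110 of 1010110 starts none of 00, 0100, 01010. *)
by [].
Qed.

Lemma cardP_le (w1 w2 : seq bool) : size w1 = size w2 ->
  (forall i, inP w1 i -> inP w2 i) -> cardP w1 <= cardP w2.
Proof.
by move=> eq_size sub; rewrite /cardP /Pset eq_size !size_filter; apply: sub_count.
Qed.

Lemma phi7_spec (u : seq bool) :
  phi7 u = u \/
  exists v v', u = v ++ pat7 ++ v' /\ phi7 u = v ++ rep7 ++ v'.
Proof.
rewrite /phi7; case E: [seq k <- _ | phi7_ok u k] => [|k ks]; first by left.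
right; exists (take k u), (drop (k + 7) u); split=> //.
have : k \in [seq k <- iota 0 (size u).+1 | phi7_ok u k] by rewrite E mem_head.
rewrite mem_filter => /andP [/andP [/eqP <- _] _].
by rewrite /factor addnC -drop_drop !cat_take_drop.
Qed.

Theorem lemma4p7 (N : nat) (hN : 1 <= N) (u : seq bool) (hu : size u = N) :
  cardP (phi7 u) <= cardP u.
Proof.
have [-> // | [v [v' [-> ->]]]] := phi7_spec u.
apply: cardP_le; first by rewrite !size_cat.
exact: inP_rep7_pat7.
Qed.
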